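(* Let $m,a,b,t\in\mathbb{N}$ with $m\geq 3$, $a\geq 1$, $t\in\{2,\ldots,m-1\}$ and $(t-1)(am+1)<bm+t<t(am+1)$, let $S=\langle m,\ am+1,\ bm+t\rangle$ (a MANS-semigroup with embedding dimension $3$), $q=\left\lfloor\frac{m-1}{t}\right\rfloor$ and $r=(m-1)\bmod t$. Then \[ \{q(bm+t)+r(am+1)\}\subseteq \mathrm{Maximals}_{\leq_S}(\mathrm{Ap}(S,m))\subseteq\{(q-1)(bm+t)+(t-1)(am+1),\ q(bm+t)+r(am+1)\} \] and, consequently, \[ \{q(bm+t)+r(am+1)-m\}\subseteq\mathrm{PF}(S)\subseteq\{(q-1)(bm+t)+(t-1)(am+1)-m,\ q(bm+t)+r(am+1)-m\}. \]
   Context: $\mathbb{N}=\{0,1,2,\ldots\}$. $\langle A\rangle$ is the submonoid of $(\mathbb{N},+)$ generated by $A$; a numerical semigroup is a submonoid of $\mathbb{N}$ with finite complement. For $n\in S\setminus\{0\}$, $\mathrm{Ap}(S,n)=\{s\in S:s-n\notin S\}$. On $\mathbb{Z}$, $x\leq_S y$ means $y-x\in S$ (a partial order); $\mathrm{Maximals}_{\leq_S}(X)$ is the set of maximal elements of $X$ for $\leq_S$. A pseudo-Frobenius number of $S$ is an $x\in\mathbb{Z}\setminus S$ with $x+s\in S$ for all $s\in S\setminus\{0\}$; $\mathrm{PF}(S)$ is the set of them. A MANS-semigroup is a numerical semigroup with $w(1)<\cdots<w(\mathrm{m}(S)-1)$, where $\mathrm{m}(S)$ is the least element of $S\setminus\{0\}$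 and $w(i)$ the least element of $S$ congruent to $i$ modulo $\mathrm{m}(S)$. $a\bmod b$ is the remainder of the division of $a$ by $b$. *)

From mathcomp Require Import all_boot all_order all_algebra.
Set Implicit Arguments. Unset Strict Implicit. Unset Printing Implicit Defensive.
Import Order.TTheory GRing.Theory Num.Theory.
Local Open Scope ring_scope.

Inductive gen (A : nat -> Prop) : nat -> Prop :=
| gen0 : gen A 0
| genS : forall a x, A a -> gen A x -> gen A (a + x)%N.

Definition set3 (g1 g2 g3 : nat) : nat -> Prop :=
  fun x => x = g1 \/ x = g2 \/ x = g3.

Definition memZ (S : nat -> Prop) (x : int) : Prop :=
  exists n : nat, x = n%:Z /\ S n.

Definition Apery (S : nat -> Prop) (n : nat) (x : int) : Prop :=
  memZ S x /\ ~ memZ S (x - n%:Z).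

Definition leS (S : nat -> Prop) (x y : int) : Prop := memZ S (y - x).

Definition Maximals (S : nat -> Prop) (X : int -> Prop) (x : int) : Prop :=
  X x /\ forall y, X y -> leS S x y -> y = x.

Definition PF (S : nat -> Prop) (x : int) : Prop :=
  ~ memZ S x /\ forall s : int, memZ S s -> s != 0 -> memZ S (x + s).

(* Write A = am+1 and B = bm+t, so that iA + jB = (ia+jb)m + (i+jt).  The
   hypotheses amount to (t-1)a <= b < ta, which make the coefficient ia+jb
   monotone in the residue i+jt along the representations with i < t.  Hence
   Ap(S,m) consists exactly of the iA + jB with i < t and i+jt < m, one for
   each residue modulo m, and the numerically largest one is x1 = qB + rA.
   An Apery element with j = q lies below x1 for <=_S, and one with j < q lies
   below x2 = (q-1)B + (t-1)A, so x1 and x2 are the only candidate maximals.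
   The claim on PF(S) is then PF(S) = Maximals(Ap(S,m)) - m, which holds in
   any submonoid of N. *)

From mathcomp Require Import all_boot all_order all_algebra zify.
From Stdlib Require Import Classical_Prop.
Set Implicit Arguments. Unset Strict Implicit. Unset Printing Implicit Defensive.
Import Order.TTheory GRing.Theory Num.Theory.

Section Submonoid.
Variable A : nat -> Prop.
Local Notation S := (gen A).

Lemma gen_addn x y : S x -> S y -> S (x + y).
Proof. by elim=> [//|g x' Ag _ IH] Sy; rewrite -addnA; apply: genS (IH Sy). Qed.

Lemma gen_mulnDl g k y : A g -> S y -> S (k * g + y).
Proof. by move=> Ag Sy; elim: k => [|k IH]; rewrite ?mulSn -?addnA; [| apply: genS]. Qed.

Lemma memZD x y : memZ S x -> memZ S y -> memZ S (x + y)%R.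
Proof.
by move=> [i [-> Si]] [j [-> Sj]]; exists (i + j); split; [rewrite PoszD | exact: gen_addn].
Qed.

Local Open Scope ring_scope.

Lemma Maximals_Apery_PF n x : Maximals S (Apery S n) x -> PF S (x - n%:Z).
Proof.
move=> [[Sx nSx] xmax]; split=> // s Ss s0.
apply: NNPP => nSxs.
suff : x + s = x by move/eqP: s0; lia.
apply: xmax; last by rewrite /leS addrC addKr.
by split; [exact: memZD | rewrite addrAC].
Qed.

Lemma PF_Maximals_Apery n x :
  A n -> n != 0%N -> PF S x -> Maximals S (Apery S n) (x + n%:Z).
Proof.
move=> An n0 [nSx PFx].
have Sn : memZ S n%:Z by exists n; split=> //; rewrite -[n]addn0; exact: genS An (gen0 A).
split=> [|y [_ nSy] [k [yk Sk]]]; first by split; [exact: PFx | rewrite addrK].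
case: k yk Sk => [|k] yk Sk; first lia.
case: nSy; have -> : y - n%:Z = x + k.+1%:Z by lia.
by apply: PFx; [exists k.+1 | lia].
Qed.

End Submonoid.

Lemma Maximals_of_max (S : nat -> Prop) (X : int -> Prop) x :
  X x -> (forall y, X y -> (y <= x)%R) -> Maximals S X x.
Proof. by move=> Xx xmax; split=> // y Xy [k [yk _]]; have := xmax y Xy; lia. Qed.

Lemma Maximals_dominated (S : nat -> Prop) (X : int -> Prop) x1 x2 :
  X x1 -> X x2 -> (forall y, X y -> leS S y x1 \/ leS S y x2) ->
  forall y, Maximals S X y -> y = x1 \/ y = x2.
Proof.
move=> X1 X2 dom y [Xy ymax].
by case: (dom y Xy) => le; [left | right]; symmetry; exact: ymax.
Qed.

Lemma gen_set3P g1 g2 g3 x :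
  gen (set3 g1 g2 g3) x <-> exists n i j, x = n * g1 + (i * g2 + j * g3).
Proof.
split=> [|[n [i [j ->]]]].
- elim=> [|g y [->|[->|->]] _ [n [i [j ->]]]]; first by exists 0, 0, 0.
  + by exists n.+1, i, j; lia.
  + by exists n, i.+1, j; lia.
  + by exists n, i, j.+1; lia.
- rewrite -[j * g3]addn0.
  apply: gen_mulnDl; first by left.
  apply: gen_mulnDl; first by right; left.
  apply: gen_mulnDl; first by right; right.
  exact: gen0.
Qed.

Lemma coef_le_lex t a b d e c f : (t - 1) * a <= b ->
  e < t -> f < t -> d * t + e <= c * t + f -> d * b + e * a <= c * b + f * a.
Proof.
move=> b_ge e_lt f_lt; case: (ltngtP d c) => [d_lt _ | c_lt le_dc | ->].
- have ea_le : e * a <= b by apply: leq_trans b_ge; apply: leq_mul => //; lia.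
  have : d.+1 * b <= c * b by exact: leq_mul.
  rewrite mulSn; lia.
- have : c.+1 * t <= d * t by exact: leq_mul.
  nia.
- by rewrite !leq_add2l => e_le; exact: leq_mul e_le (leqnn a).
Qed.

Lemma coef_le_mul t a b i : b <= t * a -> i %/ t * b + i %% t * a <= i * a.
Proof.
move=> b_le; rewrite {3}(divn_eq i t) mulnDl leq_add2r -mulnA.
by rewrite leq_mul2l b_le orbT.
Qed.

Lemma coef_mono t a b d e i j : 0 < t -> (t - 1) * a <= b -> b <= t * a ->
  e < t -> d * t + e <= i + j * t -> d * b + e * a <= i * a + j * b.
Proof.
move=> t_gt0 b_ge b_le e_lt le_de.
apply: leq_trans (_ : (i %/ t + j) * b + i %% t * a <= _).
  apply: (@coef_le_lex t); rewrite ?ltn_pmod //.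
  by rewrite mulnDl addnAC -divn_eq.
by have := coef_le_mul i b_le; lia.
Qed.

Lemma coef_bounds m a b t : 0 < m ->
    (t - 1) * (a * m + 1) < b * m + t -> b * m + t < t * (a * m + 1) ->
  (t - 1) * a <= b /\ b < t * a.
Proof.
move=> m_gt0 lo hi; split.
- by rewrite -(leq_pmul2r m_gt0); nia.
- by rewrite -(ltn_pmul2r m_gt0); nia.
Qed.

Section ThreeGenerated.
Variables m a b t : nat.

Local Notation S := (gen (set3 m (a * m + 1) (b * m + t))).
Local Notation w i j := (j * (b * m + t) + i * (a * m + 1)).

Lemma w_split i j : w i j = (i * a + j * b) * m + (i + j * t).
Proof. nia. Qed.

Lemma memS_w n i j : memZ S (n * m + w i j)%:Z.
Proof. by exists (n * m + w i j); split=> //; apply/gen_set3P; exists n, i, j; lia. Qed.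

Lemma memS_sub x y n i j : x = y + (n * m + w i j) -> memZ S (x%:Z - y%:Z)%R.
Proof. by move=> ->; rewrite PoszD addrAC subrr add0r; exact: memS_w. Qed.

Hypotheses (t_gt0 : 0 < t) (b_ge : (t - 1) * a <= b) (b_lt : b < t * a).

Lemma w_sub_m_of_residue i j : m <= i + j * t -> memZ S ((w i j)%:Z - m%:Z)%R.
Proof.
move=> le_m; set k := i + j * t - m.
have k_eq : k %/ t * t + k %% t = k by rewrite -divn_eq.
have le_coef : k %/ t * b + k %% t * a <= i * a + j * b.
  by apply: coef_mono (ltn_pmod k t_gt0) _ => //; [exact: ltnW | lia].
apply: (memS_sub (n := i * a + j * b - (k %/ t * b + k %% t * a)) (i := k %% t) (j := k %/ t)).
by rewrite !w_split mulnBl; nia.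
Qed.

Lemma w_sub_m_of_excess i j : t <= i -> memZ S ((w i j)%:Z - m%:Z)%R.
Proof.
move=> /subnKC <-; set k := t * a - b.+1.
have k_eq : t * a * m = (b.+1 + k) * m by rewrite subnKC.
by apply: (memS_sub (n := k) (i := i - t) (j := j.+1)); nia.
Qed.

Lemma Apery_w i j : i < t -> i + j * t < m -> Apery S m (w i j)%:Z.
Proof.
move=> lt_it lt_m; split; first exact: (memS_w 0).
move=> [N [eN SN]]; case/gen_set3P: SN eN => n [i' [j' ->]] eN.
have E : (i * a + j * b) * m + (i + j * t) =
    (n.+1 + (i' * a + j' * b)) * m + (i' + j' * t).
  by rewrite -w_split; have := w_split i' j'; lia.
have res : i + j * t = (i' + j' * t) %% m.
  by move/(congr1 (modn^~ m)): E; rewrite !modnMDl modn_small.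
have le_coef : j * b + i * a <= i' * a + j' * b.
  by apply: (@coef_mono t) => //; [exact: ltnW | rewrite addnC res leq_mod].
have : (j * b + i * a) * m <= (i' * a + j' * b) * m by exact: leq_mul.
nia.
Qed.

Lemma Apery_coords x : Apery S m x ->
  exists i j, [/\ x = w i j, i < t & i + j * t < m].
Proof.
move=> [[N [-> SN]] nSx]; case/gen_set3P: SN nSx => n [i [j ->]].
rewrite [i * _ + _]addnC; case: n => [|n] nSx; last first.
  by case: nSx; apply: (memS_sub (n := n) (i := i) (j := j)); rewrite mulSn -addnA.
case: (leqP t i) => [le_ti | lt_it]; first by case: nSx; exact: w_sub_m_of_excess.
case: (leqP m (i + j * t)) => [le_m | lt_m]; first by case: nSx; exact: w_sub_m_of_residue.
by exists i, j.
Qed.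

Variables q r : nat.
Hypotheses (r_lt : r < t) (m_eq : (q * t + r).+1 = m).

Lemma Apery_top : Apery S m (w r q)%:Z.
Proof. by apply: Apery_w; lia. Qed.

Lemma Apery_le_top y : Apery S m y -> (y <= (w r q)%:Z)%R.
Proof.
case/Apery_coords=> i [j [-> lt_it lt_m]].
have le_coef : j * b + i * a <= r * a + q * b.
  by apply: (@coef_mono t) => //; [exact: ltnW | lia].
have : (j * b + i * a) * m <= (r * a + q * b) * m by exact: leq_mul.
rewrite lez_nat !w_split; nia.
Qed.

Lemma Maximals_Apery_top : Maximals S (Apery S m) (w r q)%:Z.
Proof. exact: Maximals_of_max Apery_top Apery_le_top. Qed.

Hypothesis q_gt0 : 0 < q.

Lemma Apery_subtop : Apery S m (w (t - 1) (q - 1))%:Z.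
Proof. by apply: Apery_w; nia. Qed.

Lemma Apery_dominated y : Apery S m y ->
  leS S y (w (t - 1) (q - 1))%:Z \/ leS S y (w r q)%:Z.
Proof.
case/Apery_coords=> i [j [-> lt_it lt_m]].
have [lt_jq | le_qj] := ltnP j q; [left | right].
- apply: (memS_sub (n := 0) (i := t - 1 - i) (j := q - 1 - j)).
  set u := t - 1 - i; set v := q - 1 - j.
  have -> : t - 1 = i + u by rewrite /u; lia.
  have -> : q - 1 = j + v by rewrite /v; lia.
  by rewrite !mulnDl; lia.
- have j_eq : j = q.
    by apply/anti_leq; rewrite le_qj -ltnS -(ltn_pmul2r t_gt0); lia.
  subst j; apply: (memS_sub (n := 0) (i := r - i) (j := 0)); set u := r - i.
  have -> : r = i + u by rewrite /u; lia.
  by rewrite mulnDl; lia.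
Qed.

Lemma Maximals_Apery_cases y : Maximals S (Apery S m) y ->
  y = w (t - 1) (q - 1) \/ y = w r q.
Proof. exact: Maximals_dominated Apery_subtop Apery_top Apery_dominated y. Qed.

End ThreeGenerated.

Local Open Scope ring_scope.

Theorem lemma3p20 (m a b t : nat) :
  (3 <= m)%N -> (1 <= a)%N -> (2 <= t)%N -> (t <= m - 1)%N ->
  ((t - 1) * (a * m + 1) < b * m + t)%N ->
  (b * m + t < t * (a * m + 1))%N ->
  let S := gen (set3 m (a * m + 1) (b * m + t)) in
  let q := ((m - 1) %/ t)%N in
  let r := ((m - 1) %% t)%N in
  let x1 : int := (q * (b * m + t) + r * (a * m + 1))%N%:Z in
  let x2 : int := ((q - 1) * (b * m + t) + (t - 1) * (a * m + 1))%N%:Z in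
  [/\ (forall x, x = x1 -> Maximals S (Apery S m) x),
      (forall x, Maximals S (Apery S m) x -> x = x2 \/ x = x1),
      (forall x, x = x1 - m%:Z -> PF S x) &
      (forall x, PF S x -> x = x2 - m%:Z \/ x = x1 - m%:Z)].
Proof.
move=> m_ge3 _ t_ge2 t_le lo hi S q r x1 x2.
have t_gt0 : (0 < t)%N by lia.
have [b_ge b_lt] := coef_bounds (ltnW (ltnW m_ge3)) lo hi.
have q_gt0 : (0 < q)%N by rewrite divn_gt0.
have r_lt : (r < t)%N by rewrite ltn_pmod.
have m_eq : (q * t + r).+1 = m by rewrite -divn_eq; lia.
have top := Maximals_Apery_top t_gt0 b_ge b_lt r_lt m_eq.
have maximals := Maximals_Apery_cases t_gt0 b_ge b_lt r_lt m_eq q_gt0.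
split=> [x -> // | // | x -> | x PFx]; first exact: Maximals_Apery_PF.
have m_gen : set3 m (a * m + 1) (b * m + t) m by left.
have m_neq0 : m != 0%N by lia.
have := maximals _ (PF_Maximals_Apery m_gen m_neq0 PFx).
by case=> E; [left | right]; rewrite -[x](addrK m%:Z) E.
Qed.
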